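(* Let $N\ge 1$ and let $D\in\mathcal{M}_{2N,2N}(\mathbb{R})$ be a symmetric, negative semidefinite matrix with $\operatorname{Ker} D=\operatorname{Span}(\mathbf{1})$, where $\mathbf{1}=(1,\dots,1)^T\in\mathbb{R}^{2N}$. Assume moreover that $D_{i,j}\ge 0$ for all $i\neq j$, and that there exists a sequence $k_0,\dots,k_n$ of integers in $\{1,\dots,2N\}$ containing every integer of $\{1,\dots,2N\}$, with $k_m\neq k_{m+1}$ and $D_{k_m,k_{m+1}}>0$ for all $m$. Let $F\in\mathbb{R}^{2N}$ have strictly positive components, and let $\ln(F)$ denote the vector $(\ln F_1,\dots,\ln F_{2N})^T$. Then the following are equivalent: (1) $DF=0$; (2) $F=\rho\mathbf{1}$ with $\rho=\frac{1}{2N}\sum_{j=1}^{2N}F_j$; (3) $\langle DF,\ln(F)\rangle=0$, where $\langle U,W\rangle=\sum_{k=1}^{2N}U_kW_k$.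
   Context: The matrix $D$ is a velocity discretization of a linear collision operator; $\langle\cdot,\cdot\rangle$ is the Euclidean inner product on $\mathbb{R}^{2N}$. *)

From mathcomp Require Import all_boot all_order all_algebra.
From mathcomp Require Import all_classical all_reals all_analysis.
Set Implicit Arguments. Unset Strict Implicit. Unset Printing Implicit Defensive.
Import Order.TTheory GRing.Theory Num.Theory.
Local Open Scope ring_scope.

Definition dotv (R : realType) (n : nat) (U W : 'cV[R]_n) : R :=
  \sum_(k < n) U k 0 * W k 0.

Definition lnv (R : realType) (n : nat) (F : 'cV[R]_n) : 'cV[R]_n :=
  \col_k ln (F k 0).

Definition onev (R : realType) (n : nat) : 'cV[R]_n := const_mx 1.

(** The matrix D is symmetric with zero row sums, so for all u, v
      sum_(i,j) D_ij (u_i - u_j)(v_i - v_j) = -2 <D u, v>.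
    With u = F and v = ln F every term on the left is nonnegative, since
    D_ij >= 0 off the diagonal and ln is increasing. Hence <D F, ln F> = 0
    forces D_ij (F_j - F_i) = 0 for all i, j, which together with the zero row
    sums gives D F = 0, i.e. F is constant; the constant is then the mean of F. *)

From mathcomp Require Import all_boot all_order all_algebra.
From mathcomp Require Import all_classical all_reals all_analysis.
From mathcomp Require Import ring.
Import Order.TTheory GRing.Theory Num.Theory.
Local Open Scope ring_scope.

Section ZeroRowSums.

Variables (R : comPzRingType) (n : nat) (D : 'M[R]_n).
Hypothesis D_sym : D^T = D.
Hypothesis D_const : D *m (const_mx 1 : 'cV[R]_n) = 0.

Lemma row_sum_eq0 i : \sum_j D i j = 0.
Proof.
have := congr1 (fun M : 'cV[R]_n => M i 0) D_const; rewrite !mxE => Di1.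
by rewrite -[RHS]Di1; apply: eq_bigr => j _; rewrite mxE mulr1.
Qed.

Lemma mulmx_col_sub (u : 'cV[R]_n) i :
  (D *m u) i 0 = \sum_j D i j * (u j 0 - u i 0).
Proof.
rewrite mxE (eq_bigr (fun j => D i j * u i 0 + D i j * (u j 0 - u i 0))).
  by rewrite big_split /= -mulr_suml row_sum_eq0 mul0r add0r.
by move=> j _; ring.
Qed.

Lemma mulmx_eq0_const_on_edges (u : 'cV[R]_n) :
  (forall i j, D i j * (u j 0 - u i 0) = 0) -> D *m u = 0.
Proof.
by move=> edge; apply/matrixP => i c; rewrite ord1 mulmx_col_sub mxE big1.
Qed.

Lemma dirichlet_form_mulmx (u v : 'cV[R]_n) :
  \sum_i \sum_j D i j * ((u i 0 - u j 0) * (v i 0 - v j 0))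
    = - (\sum_i (D *m u) i 0 * v i 0) *+ 2.
Proof.
have DC i j : D i j = D j i by rewrite -{1}D_sym mxE.
have cross : \sum_i \sum_j D i j * (u i 0 * v j 0)
             = \sum_i (D *m u) i 0 * v i 0.
  rewrite exchange_big /=; apply: eq_bigr => i _; rewrite mxE mulr_suml.
  by apply: eq_bigr => j _; rewrite DC; ring.
have diag i : \sum_j D i j * (u i 0 * v i 0) = 0.
  by rewrite -mulr_suml row_sum_eq0 mul0r.
have diag' : \sum_i \sum_j D i j * (u j 0 * v j 0) = 0.
  rewrite exchange_big /= big1 // => j _.
  by under eq_bigr => i _ do rewrite DC; rewrite diag.
have cross' : \sum_i \sum_j D i j * (u j 0 * v i 0)
              = \sum_i (D *m u) i 0 * v i 0.
  by apply: eq_bigr => i _; rewrite mxE mulr_suml; apply: eq_bigr => j _; ring.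
rewrite (eq_bigr (fun i => \sum_j D i j * (u i 0 * v i 0)
    + \sum_j D i j * (u j 0 * v j 0)
    - (\sum_j D i j * (u i 0 * v j 0) + \sum_j D i j * (u j 0 * v i 0)))).
  rewrite sumrB !big_split /= big1 // diag' cross cross'.
  by rewrite addr0 sub0r mulr2n opprD.
by move=> i _; rewrite -!big_split -sumrB; apply: eq_bigr => j _ /=; ring.
Qed.

End ZeroRowSums.

Lemma mul_subr_lnB_gt0 {R : realType} (a b : R) :
  0 < a -> 0 < b -> a != b -> 0 < (a - b) * (ln a - ln b).
Proof.
move=> a0 b0; case: (ltrgtP a b) => // ab _.
  by rewrite -mulrNN !opprB mulr_gt0 // subr_gt0 // ltr_ln ?posrE.
by rewrite mulr_gt0 // subr_gt0 // ltr_ln ?posrE.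
Qed.

Lemma mul_subr_lnB_ge0 {R : realType} (a b : R) :
  0 < a -> 0 < b -> 0 <= (a - b) * (ln a - ln b).
Proof.
move=> a0 b0; have [->|ab] := eqVneq a b; first by rewrite subrr mul0r.
exact/ltW/mul_subr_lnB_gt0.
Qed.

Lemma dotv_mulmx_lnv_eq0 (R : realType) (n : nat) (D : 'M[R]_n)
    (F : 'cV[R]_n) :
  D^T = D -> D *m (const_mx 1 : 'cV[R]_n) = 0 ->
  (forall i j, i != j -> 0 <= D i j) -> (forall i, 0 < F i 0) ->
  dotv (D *m F) (lnv F) = 0 -> D *m F = 0.
Proof.
move=> D_sym D_const D_off F_pos dot0.
pose t i j := D i j * ((F i 0 - F j 0) * (lnv F i 0 - lnv F j 0)).
have t_ge0 i j : 0 <= t i j.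
  rewrite /t !mxE; have [->|ij] := eqVneq i j.
    by rewrite subrr mul0r mulr0.
  by rewrite mulr_ge0 ?D_off ?mul_subr_lnB_ge0.
have sum_t : \sum_(p : 'I_n * 'I_n) t p.1 p.2 = 0.
  rewrite -(pair_bigA _ t) dirichlet_form_mulmx //.
  by rewrite -[X in - X]/(dotv (D *m F) (lnv F)) dot0 oppr0 mul0rn.
apply: mulmx_eq0_const_on_edges => // i j.
have := psumr_eq0P (fun p _ => t_ge0 p.1 p.2) sum_t (i := (i, j)) isT.
rewrite /t !mxE /= => /eqP; rewrite mulf_eq0 => /orP[/eqP ->|].
  exact: mul0r.
have [-> _|ij] := eqVneq (F i 0) (F j 0); first by rewrite subrr mulr0.
by rewrite gt_eqF // mul_subr_lnB_gt0 ?F_pos.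
Qed.

Lemma mean_scale_onev (R : realType) (n : nat) (c : R) :
  (0 < n)%N -> n%:R^-1 * \sum_j (c *: onev R n) j 0 = c.
Proof.
move=> n_gt0; under eq_bigr => j _ do rewrite !mxE mulr1.
rewrite sumr_const card_ord -(mulr_natr c) mulrCA mulVf ?mulr1 //.
by rewrite pnatr_eq0 -lt0n.
Qed.

Theorem proposition2 (R : realType) (N : nat) (hN : (1 <= N)%N)
  (D : 'M[R]_(2 * N))
  (Dsym : D^T = D)
  (Dnsd : forall x : 'cV[R]_(2 * N), (x^T *m D *m x) 0 0 <= 0)
  (Dker : forall x : 'cV[R]_(2 * N),
      D *m x = 0 <-> exists c : R, x = c *: onev R (2 * N))
  (Doff : forall i j : 'I_(2 * N), i != j -> 0 <= D i j)
  (k : seq 'I_(2 * N)) (k0 : 'I_(2 * N))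
  (kne : (0 < size k)%N)
  (kall : forall i : 'I_(2 * N), i \in k)
  (kchain : forall m : nat, (m.+1 < size k)%N ->
      nth k0 k m != nth k0 k m.+1 /\ 0 < D (nth k0 k m) (nth k0 k m.+1))
  (F : 'cV[R]_(2 * N)) (Fpos : forall i : 'I_(2 * N), 0 < F i 0) :
  let rho := (2 * N)%:R^-1 * \sum_(j < 2 * N) F j 0 in
  (D *m F = 0 <-> F = rho *: onev R (2 * N)) /\
  (F = rho *: onev R (2 * N) <-> dotv (D *m F) (lnv F) = 0).
Proof.
move=> rho.
have n_gt0 : (0 < 2 * N)%N by rewrite muln_gt0.
have D_const : D *m (const_mx 1 : 'cV[R]_(2 * N)) = 0.
  by apply/Dker; exists 1; rewrite scale1r.
have kerF : D *m F = 0 <-> F = rho *: onev R (2 * N).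
  split; last by move=> F_rho; apply/Dker; exists rho.
  by case/Dker => c F_c; rewrite /rho F_c mean_scale_onev.
split=> //; split=> [/kerF DF0 | dot0].
  by rewrite /dotv DF0 big1 // => i _; rewrite mxE mul0r.
by apply/kerF; exact: dotv_mulmx_lnv_eq0 Dsym D_const Doff Fpos dot0.
Qed.
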